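(* Let $A$ and $\hat A$ be real $n\times n$ matrices, both in ordered real Schur form, and let $U$ be a real orthogonal matrix with $\hat AU=UA$. Let $m$ be the number of distinct complex conjugate pairs of non-real eigenvalues plus the number of distinct real eigenvalues of $A$. Partition $A$, $\hat A$ and $U$ conformally into $m\times m$ block form, where each diagonal block index corresponds to the maximal set of consecutive diagonal Schur blocks sharing the same eigenvalue(s). Then $U=U_1\oplus U_2\oplus\cdots\oplus U_m$ with each $U_i$ orthogonal.
   Context: A real matrix $A$ is in real Schur form if it is block upper triangular with diagonal blocks $Z_1,\dots,Z_M$ (in this order), where $Z_1,\dots,Z_\ell$ are $2\times 2$ real blocks each having a pair of non-real complex conjugate eigenvalues and $Z_{\ell+1},\dots,Z_M$ are $1\times1$ real blocks ($M=n-\ell$). Writing $\lambda^{(k)}$ for an eigenvalue of $Z_k$, $A$ is in ordered real Schur form if (1) $|\lambda^{(i)}|\le|\lambda^{(j)}|$ whenever $i<j\le\ell$ or $\ell<i<j\le M$, and (2) if in such a case $|\lambda^{(i)}|=|\lambda^{(j)}|$, then $\operatorname{Re}\lambda^{(j)}\le\operatorname{Re}\lambda^{(i)}$. (Under this ordering, diagonal blocks with equal eigenvalues are consecutive.) *)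

From HB Require Import structures.
From mathcomp Require Import all_boot all_order all_algebra.
From mathcomp Require Import complex.
From mathcomp Require Import boolp.
Set Implicit Arguments. Unset Strict Implicit. Unset Printing Implicit Defensive.
Import Order.TTheory GRing.Theory Num.Theory.

Section Schur.
Variable R : rcfType.

(* Entry of an n x n matrix indexed by natural numbers (0 outside range). *)
Definition mxe (n : nat) (A : 'M[R]_n) (i j : nat) : R :=
  match (insub i : option 'I_n), (insub j : option 'I_n) with
  | Some i', Some j' => A i' j'
  | _, _ => 0%R
  end.

(* Block structure with l leading 2x2 blocks followed by 1x1 blocks
   (0-based indices).  Block k (k < l) occupies rows/cols 2k, 2k+1;
   block k (k >= l) occupies row/col k + l. *)
Definition blk (l p : nat) : nat := if p < l.*2 then p./2 else p - l.
Definition nblocks (n l : nat) : nat := n - l.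

Definition Z2 (n : nat) (A : 'M[R]_n) (k : nat) : 'M[R]_2 :=
  \matrix_(i < 2, j < 2) mxe A (k.*2 + i) (k.*2 + j).

Definition block_eig (n l : nat) (A : 'M[R]_n) (k : nat) (lam : R[i]) : Prop :=
  if k < l then is_true (root (map_poly (real_complex R) (char_poly (Z2 A k))) lam)
  else lam = ((mxe A (k + l) (k + l))%:C)%C.

Definition real_schur (n l : nat) (A : 'M[R]_n) : Prop :=
  [/\ l.*2 <= n,
      (forall i j : 'I_n, blk l j < blk l i -> A i j = 0%R) &
      (forall k, k < l -> forall lam, block_eig l A k lam -> complex.Im lam != 0%R)].

Definition ordered_real_schur (n l : nat) (A : 'M[R]_n) : Prop :=
  real_schur l A /\
  forall i j, i < j < nblocks n l -> ((j < l) || (l <= i)) ->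
    forall li lj, block_eig l A i li -> block_eig l A j lj ->
      (Normc.normc li <= Normc.normc lj)%R /\
      (Normc.normc li = Normc.normc lj -> complex.Re lj <= complex.Re li)%R.

Definition same_eigs (n l : nat) (A : 'M[R]_n) (k k' : nat) : Prop :=
  forall lam, block_eig l A k lam <-> block_eig l A k' lam.

Definition same_run (n l : nat) (A : 'M[R]_n) (k k' : nat) : Prop :=
  forall t, minn k k' <= t <= maxn k k' -> same_eigs l A k t.

(* Rows/columns p and q of the conformal partition lie in the same
   diagonal block index (of the m x m block partition). *)
Definition same_group (n l : nat) (A : 'M[R]_n) (p q : nat) : Prop :=
  same_run l A (blk l p) (blk l q).

Definition same_group_b (n l : nat) (A : 'M[R]_n) (p q : nat) : bool :=
  `[< same_group l A p q >].

Definition orthogonal_mx (n : nat) (U : 'M[R]_n) : Prop := (U^T *m U = 1%:M)%R.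

End Schur.

(* Give every diagonal Schur block Z the key (is its spectrum real, det Z, - tr Z): the
   ordering conditions say precisely that the keys increase along the diagonal for the
   lexicographic order (complex blocks first, then by modulus, then by decreasing real part).
   If the block of A containing column j has key <= c and the block of Ah containing row i
   has key > c, then U_ij = 0: the product q of the characteristic polynomials of the
   blocks of A of key <= c kills e_j (block triangularity and Cayley-Hamilton), hence
   q(Ah) kills U e_j, while q(Zh) is invertible for every block Zh of Ah of key > c, two
   quadratics without distinct real roots being coprime as soon as they differ.  By
   orthogonality of U the sets of rows of key <= c for A and for Ah then have the same size;
   being initial segments they coincide, so A and Ah have the same key on every row, and
   U_ij <> 0 forces rows i and j to have the same key, i.e. to lie in the same group. *)

From HB Require Import structures.
From mathcomp Require Import all_boot all_order all_algebra.
From mathcomp Require Import complex.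
From mathcomp Require Import ring lra zify.
From mathcomp Require boolp.
Import Order.TTheory GRing.Theory Num.Theory.
Local Open Scope ring_scope.
Set Implicit Arguments. Unset Strict Implicit. Unset Printing Implicit Defensive.

Lemma ord2P (i : 'I_2) : i = 0 \/ i = 1.
Proof. by case: i => [[|[|//]] ?]; [left|right]; apply: val_inj. Qed.

Lemma sum_ord2 (V : nmodType) (F : 'I_2 -> V) : \sum_(i < 2) F i = F 0 + F 1.
Proof. by rewrite !big_ord_recl big_ord0 addr0; congr (F _ + F _); apply: val_inj. Qed.

Lemma mxtrace2 (R : pzSemiRingType) (Z : 'M[R]_2) : \tr Z = Z 0 0 + Z 1 1.
Proof. exact: sum_ord2. Qed.

Lemma det_mx2 (R : comNzRingType) (Z : 'M[R]_2) : \det Z = Z 0 0 * Z 1 1 - Z 0 1 * Z 1 0.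
Proof.
rewrite (expand_det_row _ 0) sum_ord2 /cofactor !det_mx11 !mxE /=.
rewrite expr0 expr1 mul1r mulN1r mulrN.
by congr (_ * Z _ _ - _ * Z _ _); apply: val_inj.
Qed.

Section Matrix2.
Variable R : comNzRingType.
Implicit Types W Z : 'M[R]_2.

Lemma char_poly_mx2 Z : char_poly Z = 'X^2 - (\tr Z)%:P * 'X + (\det Z)%:P.
Proof.
rewrite /char_poly mxtrace2 !det_mx2 !mxE /= mulr1n mulr0n !(polyCD, polyCN, polyCM).
by ring.
Qed.

Lemma horner_mx_char_poly2 W Z :
  horner_mx Z (char_poly W) = Z *m Z - \tr W *: Z + (\det W)%:M.
Proof.
by rewrite char_poly_mx2 !(rmorphD, rmorphN, rmorphM) /= horner_mx_X !horner_mx_C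
  -mulmxE mul_scalar_mx.
Qed.

Lemma det_horner_mx_char_poly2 W Z :
  \det (horner_mx Z (char_poly W)) =
  (\tr Z - \tr W) ^+ 2 * \det Z + (\tr Z - \tr W) * (\det W - \det Z) * \tr Z
    + (\det W - \det Z) ^+ 2.
Proof.
rewrite horner_mx_char_poly2 det_mx2 !mxtrace2 !det_mx2 /scalar_mx !mxE !sum_ord2 /=.
by rewrite ?mulr1n ?mulr0n; ring.
Qed.

End Matrix2.

Section RealMatrix2.
Variable R : realFieldType.
Implicit Types W Z : 'M[R]_2.

Definition disc_mx2 Z := \tr Z ^+ 2 - 4 * \det Z.

(* The left-hand side is the resultant of X^2 - t0 X + d0 and X^2 - t X + d; four times it
   is a sum of two squares in two different ways. *)
Lemma resultant2_eq0 (t0 d0 t d : R) : t0 ^+ 2 <= 4 * d0 -> t ^+ 2 <= 4 * d ->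
  (t0 - t) ^+ 2 * d0 + (t0 - t) * (d - d0) * t0 + (d - d0) ^+ 2 = 0 -> t = t0 /\ d = d0.
Proof.
rewrite -subr_ge0 => disc0; rewrite -subr_ge0 => disc res.
have sqr_add_eq0 (x y : R) : 0 <= y -> x ^+ 2 + y = 0 -> x = 0.
  by move=> y0 e; apply/eqP; rewrite -sqrf_eq0; apply/eqP; have := sqr_ge0 x; lra.
have /(sqr_add_eq0 _ _ (mulr_ge0 (sqr_ge0 _) disc0)) e0 :
    (2 * (d - d0) + (t0 - t) * t0) ^+ 2 + (t0 - t) ^+ 2 * (4 * d0 - t0 ^+ 2) = 0.
  by rewrite -[RHS](mulr0 4) -res; ring.
have /(sqr_add_eq0 _ _ (mulr_ge0 (sqr_ge0 _) disc)) e1 :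
    (2 * (d0 - d) + (t - t0) * t) ^+ 2 + (t - t0) ^+ 2 * (4 * d - t ^+ 2) = 0.
  by rewrite -[RHS](mulr0 4) -res; ring.
have /eqP : (t0 - t) ^+ 2 = 0 by rewrite -[RHS](addr0 0) -{1}e0 -e1; ring.
rewrite sqrf_eq0 subr_eq0 => /eqP et; split=> //.
by move: e0; rewrite et subrr mul0r addr0; lra.
Qed.

Lemma char_poly_mx2_inj W Z : \tr W = \tr Z -> \det W = \det Z -> char_poly W = char_poly Z.
Proof. by move=> etr edet; rewrite !char_poly_mx2 etr edet. Qed.

Lemma horner_mx_char_poly2_unit W Z : disc_mx2 W <= 0 -> disc_mx2 Z <= 0 ->
  char_poly W != char_poly Z -> horner_mx Z (char_poly W) \in unitmx.
Proof.
rewrite /disc_mx2 !subr_le0 => discW discZ; apply: contraR.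
rewrite unitmxE unitfE negbK det_horner_mx_char_poly2 => /eqP res.
have [etr edet] := resultant2_eq0 discZ discW res.
by rewrite (char_poly_mx2_inj etr edet).
Qed.

(* If Z has eigenvalues lam, lam^*, its key is (lam is real, |lam|^2, -2 Re lam). *)
Definition mx2_key Z : (bool *l R) *l R := ((disc_mx2 Z == 0, \det Z), - \tr Z).

Lemma mx2_key_eq W Z : (mx2_key W == mx2_key Z) = (char_poly W == char_poly Z).
Proof.
apply/eqP/eqP => [[_ edet /oppr_inj etr]|echar]; first exact: char_poly_mx2_inj.
have etr : \tr W = \tr Z by apply: oppr_inj; rewrite -!char_poly_trace // echar.
have edet : \det W = \det Z.
  apply: (@mulfI _ ((-1) ^+ 2)); last by rewrite -!char_poly_det echar.
  by rewrite sqrf_eq0 oppr_eq0 oner_eq0.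
by rewrite /mx2_key /disc_mx2 etr edet.
Qed.

Lemma disc_mx2_le0_det_ge0 Z : disc_mx2 Z <= 0 -> 0 <= \det Z.
Proof. by rewrite /disc_mx2 subr_le0 => ?; have := sqr_ge0 (\tr Z); lra. Qed.

Lemma disc_scalar_mx2 (a : R) : disc_mx2 a%:M = 0.
Proof. by rewrite /disc_mx2 mxtrace_scalar det_scalar mulr2n; ring. Qed.

Lemma mx2_key_le_real W Z : disc_mx2 W != 0 -> disc_mx2 Z == 0 -> (mx2_key W <= mx2_key Z)%O.
Proof. by rewrite /mx2_key => /negbTE-> ->; rewrite !lexi_pair. Qed.

Lemma mx2_key_le W Z : (disc_mx2 W == 0) = (disc_mx2 Z == 0) -> \det W <= \det Z ->
  (\det W = \det Z -> \tr Z <= \tr W) -> (mx2_key W <= mx2_key Z)%O.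
Proof.
rewrite /mx2_key => -> le_det le_tr; rewrite !lexi_pair lexx le_det /= lerN2.
by apply/implyP => ge_det; apply: le_tr; apply/eqP; rewrite eq_le le_det.
Qed.

End RealMatrix2.

Section Eigen.
Variable R : rcfType.
Implicit Types W Z : 'M[R]_2.
Local Notation cpoly Z := (map_poly (real_complex R) (char_poly Z)).

Lemma disc_mx2_lt0 Z : (forall lam, root (cpoly Z) lam -> complex.Im lam != 0) ->
  disc_mx2 Z < 0.
Proof.
move=> nonreal; rewrite ltNge; apply/negP => disc_ge0.
pose x := (\tr Z + Num.sqrt (disc_mx2 Z)) / 2.
have /(rmorph_root (real_complex R)) /nonreal : root (char_poly Z) x.
  have sqr_s : Num.sqrt (disc_mx2 Z) ^+ 2 = \tr Z ^+ 2 - 4 * \det Z by rewrite sqr_sqrtr.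
  rewrite /root char_poly_mx2 !hornerE /x /=; apply/eqP.
  rewrite [LHS](_ : _ = (Num.sqrt (disc_mx2 Z) ^+ 2 - (\tr Z ^+ 2 - 4 * \det Z)) / 4).
    by rewrite sqr_s subrr mul0r.
  by field.
by rewrite eqxx.
Qed.

Lemma char_poly2_root Z : disc_mx2 Z <= 0 -> exists lam,
  [/\ root (cpoly Z) lam, Normc.normc lam = Num.sqrt (\det Z) & complex.Re lam = \tr Z / 2].
Proof.
move=> disc_le0; set r := Num.sqrt (- disc_mx2 Z).
have sqr_r : r ^+ 2 = 4 * \det Z - \tr Z ^+ 2.
  by rewrite sqr_sqrtr ?oppr_ge0 // /disc_mx2 opprB.
exists (Complex (\tr Z / 2) (r / 2)); split => //=.
  rewrite /root char_poly_mx2 !(rmorphD, rmorphN, rmorphM) /= map_polyX !map_polyC !hornerE /=.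
  rewrite eq_complex /=; apply/andP; split; apply/eqP; last by field.
  rewrite [LHS](_ : _ = (4 * \det Z - \tr Z ^+ 2 - r ^+ 2) / 4); last by field.
  by rewrite sqr_r subrr mul0r.
congr Num.sqrt; rewrite [LHS](_ : _ = (\tr Z ^+ 2 + r ^+ 2) / 4); last by field.
by rewrite sqr_r; field.
Qed.

Lemma horner_mx_prod_char_poly2_eq0 (I : eqType) (s : seq I) (P : pred I)
    (F : I -> 'M[R]_2) Z m (v : 'M[R]_(2, m)) :
  disc_mx2 Z <= 0 ->
  (forall k, k \in s -> P k -> disc_mx2 (F k) <= 0 /\ char_poly (F k) != char_poly Z) ->
  horner_mx Z (\prod_(k <- s | P k) char_poly (F k)) *m v = 0 -> v = 0.
Proof.
move=> discZ; elim: s => [|k s IHs] coprime; first by rewrite big_nil rmorph1 mul1mx.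
have {}IHs : horner_mx Z (\prod_(j <- s | P j) char_poly (F j)) *m v = 0 -> v = 0.
  by apply: IHs => j sj; apply: coprime; rewrite in_cons sj orbT.
rewrite big_cons; case: ifP => Pk //.
have [discF neF] := coprime k (mem_head _ _) Pk.
rewrite rmorphM /= -mulmxA => /(congr1 (mulmx (invmx (horner_mx Z (char_poly (F k)))))).
by rewrite mulKmx ?horner_mx_char_poly2_unit // mulmx0.
Qed.

End Eigen.

Lemma horner_mx_intertwine (R : comNzRingType) m n (A : 'M[R]_n.+1) (B : 'M[R]_m.+1)
    (U : 'M[R]_(m.+1, n.+1)) p :
  B *m U = U *m A -> horner_mx B p *m U = U *m horner_mx A p.
Proof.
move=> BU; elim/poly_ind: p => [|p c IHp]; first by rewrite !rmorph0 mul0mx mulmx0.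
rewrite !(rmorphD, rmorphM) /= !horner_mx_X !horner_mx_C mulmxDl mulmxDr.
by rewrite -mulmxA BU mulmxA IHp -mulmxA scalar_mxC.
Qed.

Lemma mxeE (R : rcfType) n (A : 'M[R]_n) (i j : 'I_n) : mxe A i j = A i j.
Proof. by rewrite /mxe !valK. Qed.

Lemma leq_blk l p q : (p <= q)%N -> (blk l p <= blk l q)%N.
Proof. by rewrite /blk => le_pq; case: ifP => ?; case: ifP => ?; rewrite -?divn2; lia. Qed.

(* The dimension is n'.+1 because horner_mx is only defined on nonempty square matrices. *)
Section BlockTriangular.
Variables (R : rcfType) (n' l : nat).
Local Notation n := n'.+1.
Local Notation N := (nblocks n l).
Hypothesis l_le : (l.*2 <= n)%N.
Implicit Types (A : 'M[R]_n) (y : 'cV[R]_n) (b k : nat).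

(* A 1x1 block a is encoded as the scalar block a%:M, both of whose rows read row k + l of
   A; thus every block has a quadratic characteristic polynomial, (X - a)^2 if a is real. *)
Definition block_pos k r := if (k < l)%N then (k.*2 + r)%N else (k + l)%N.

Definition block_ord k r : 'I_n := inord (block_pos k r).

Definition diag_block A k : 'M[R]_2 :=
  if (k < l)%N then Z2 A k else (mxe A (k + l) (k + l))%:M.

Definition block_proj k : 'M[R]_(2, n) := \matrix_(r < 2, i < n) (i == block_ord k r)%:R.

Definition block_triu A := forall i j : 'I_n, (blk l j < blk l i)%N -> A i j = 0.

Definition supported_before b y := forall i : 'I_n, (b <= blk l i)%N -> y i 0 = 0.

Lemma blk_lt_nblocks (i : 'I_n) : (blk l i < N)%N.
Proof. by have := ltn_ord i; rewrite /blk /nblocks; case: ifP; rewrite -?divn2; lia. Qed.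

Lemma block_ordE k r : (k < N)%N -> (r < 2)%N -> block_ord k r = block_pos k r :> nat.
Proof.
move=> lt_k lt_r; rewrite inordK // /block_pos; move: lt_k; rewrite /nblocks; case: ifP => ? ?; lia.
Qed.

Lemma blk_block_ord k r : (k < N)%N -> (r < 2)%N -> blk l (block_ord k r) = k.
Proof.
move=> ? ?; rewrite block_ordE // /block_pos /blk.
by case: (ltnP k l) => ?; case: ifP => ?; rewrite -?divn2; lia.
Qed.

Lemma block_ordP (i : 'I_n) : exists2 r, (r < 2)%N & i = block_ord (blk l i) r.
Proof.
have blk_i := blk_lt_nblocks i.
suff [r lt_r2 ei] : exists2 r, (r < 2)%N & i = block_pos (blk l i) r :> nat.
  by exists r => //; apply: val_inj => /=; rewrite block_ordE.
move: blk_i; rewrite /block_pos /blk /nblocks; case: ifP => lt_i.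
  exists (i %% 2)%N; rewrite ?ltn_mod // -divn2.
  have lt_il : (i %/ 2 < l)%N by lia.
  by rewrite lt_il; have := divn_eq i 2; lia.
by exists 0%N; rewrite // ifF; lia.
Qed.

Lemma block_projE k y r : (block_proj k *m y) r 0 = y (block_ord k r) 0.
Proof.
rewrite mxE (bigD1 (block_ord k r)) //= mxE eqxx mul1r big1 ?addr0 // => j nej.
by rewrite mxE (negbTE nej) mul0r.
Qed.

Lemma supported_before0 y : supported_before 0 y -> y = 0.
Proof. by move=> y0; apply/matrixP => i j; rewrite (ord1 j) mxE y0. Qed.

Lemma supported_beforeS k y : (k < N)%N ->
  supported_before k.+1 y -> block_proj k *m y = 0 -> supported_before k y.
Proof.
move=> lt_k yk1 yk i le_ki; case: (ltnP k (blk l i)) => [|le_ik]; first exact: yk1.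
have blk_i : blk l i = k by apply/eqP; rewrite eqn_leq le_ik le_ki.
have [r lt_r2 ->] := block_ordP i.
by rewrite blk_i -[r]/(Ordinal lt_r2 : nat) -block_projE yk mxE.
Qed.

Lemma supported_mul A b y : block_triu A -> supported_before b y -> supported_before b (A *m y).
Proof.
move=> triuA yb i le_bi; rewrite mxE big1 // => j _.
case: (ltnP (blk l j) (blk l i)) => [lt_ji|le_ij]; first by rewrite triuA ?mul0r.
by rewrite yb ?mulr0 // (leq_trans le_bi).
Qed.

Lemma supported_horner A p b y : block_triu A -> supported_before b y ->
  supported_before b (horner_mx A p *m y).
Proof.
move=> triuA; elim/poly_ind: p y => [|p c IHp] y yb.
  by move=> i _; rewrite rmorph0 mul0mx mxE.
rewrite !(rmorphD, rmorphM) /= horner_mx_X horner_mx_C mulmxDl -mulmxA => i le_bi.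
by rewrite mxE (IHp _ (supported_mul triuA yb)) // mul_scalar_mx mxE yb // mulr0 addr0.
Qed.

Lemma sum_block k (F : 'I_n -> R) : (k < N)%N ->
  \sum_(j : 'I_n | blk l j == k) F j =
  if (k < l)%N then F (block_ord k 0) + F (block_ord k 1) else F (block_ord k 0).
Proof.
move=> lt_k; have blk_ord r : (r < 2)%N -> blk l (block_ord k r) == k.
  by move=> lt_r2; rewrite blk_block_ord.
have in_block (j : 'I_n) : blk l j == k -> j = block_ord k 0 \/ j = block_ord k 1.
  move=> /eqP blk_j; have [r lt_r2 ->] := block_ordP j.
  by rewrite blk_j; case: r lt_r2 => [|[|]]; auto.
rewrite (bigD1 (block_ord k 0)) ?blk_ord //=; case: ifP => lt_kl.
  have ne01 : block_ord k 1 != block_ord k 0.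
    by apply/eqP => /(congr1 val); rewrite /= !block_ordE // /block_pos lt_kl; lia.
  rewrite (bigD1 (block_ord k 1)) /= ?blk_ord ?ne01 // big_pred0 ?addr0 // => j.
  by apply/negbTE/negP => /andP[/andP[/in_block[]-> /eqP]]; rewrite // eqxx.
have e01 : block_ord k 1 = block_ord k 0.
  by apply: val_inj; rewrite /= !block_ordE // /block_pos lt_kl.
rewrite big_pred0 ?addr0 // => j; apply/negbTE/negP => /andP[/in_block].
by rewrite e01 => -[]->; rewrite eqxx.
Qed.

Lemma block_proj_mul A k y : (k < N)%N -> block_triu A -> supported_before k.+1 y ->
  block_proj k *m (A *m y) = diag_block A k *m (block_proj k *m y).
Proof.
move=> lt_k triuA yk; apply/matrixP => r c; rewrite (ord1 c) block_projE !mxE sum_ord2.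
rewrite !block_projE (bigID (fun j : 'I_n => blk l j == k)) /= [X in _ + X]big1 ?addr0; last first.
  move=> j ne_jk; case: (ltnP (blk l j) k) => [lt_jk|le_kj].
    by rewrite triuA ?mul0r // blk_block_ord.
  by rewrite yk ?mulr0 // ltn_neqAle eq_sym ne_jk.
rewrite sum_block // /diag_block; case: ifP => lt_kl.
  by rewrite !mxE -!mxeE !block_ordE ?ltn_ord // /block_pos lt_kl.
have block_ord_const s : (s < 2)%N -> block_ord k s = block_ord k 0.
  by move=> lt_s2; apply: val_inj; rewrite /= !block_ordE // /block_pos lt_kl.
rewrite !mxE !block_ord_const ?ltn_ord // -mxeE block_ordE // /block_pos lt_kl.
by case: (ord2P r) => ->; rewrite /= ?mulr1n ?mulr0n ?mul0r ?addr0 ?add0r.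
Qed.

Lemma block_proj_horner A p k y : (k < N)%N -> block_triu A -> supported_before k.+1 y ->
  block_proj k *m (horner_mx A p *m y) = horner_mx (diag_block A k) p *m (block_proj k *m y).
Proof.
move=> lt_k triuA; elim/poly_ind: p y => [|p c IHp] y yk.
  by rewrite !rmorph0 !mul0mx mulmx0.
rewrite !(rmorphD, rmorphM) /= !horner_mx_X !horner_mx_C !mulmxDl !mulmxDr -!mulmxA.
have PAy := block_proj_mul lt_k triuA yk.
rewrite IHp; last exact: supported_mul.
by rewrite [c%:M *m y]mul_scalar_mx [c%:M *m _]mul_scalar_mx -PAy scalemxAr.
Qed.

Lemma horner_mx_prod_diag_blocks_eq0 A b y : (b <= N)%N -> block_triu A ->
  supported_before b y -> horner_mx A (\prod_(0 <= k < b) char_poly (diag_block A k)) *m y = 0.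
Proof.
move=> + triuA; elim: b y => [|b IHb] y le_bN yb.
  by rewrite big_geq // rmorph1 mul1mx (supported_before0 yb).
rewrite big_nat_recr // rmorphM -mulmxA; apply: IHb; first exact: ltnW.
apply: supported_beforeS => //; first exact: supported_horner.
by rewrite block_proj_horner // Cayley_Hamilton mul0mx.
Qed.

Lemma supported_before_horner_eq0 A (I : eqType) (s : seq I) (P : pred I)
    (F : I -> 'M[R]_2) b y :
  (b <= N)%N -> block_triu A -> (forall k, (b <= k < N)%N -> disc_mx2 (diag_block A k) <= 0) ->
  (forall i, i \in s -> P i -> disc_mx2 (F i) <= 0 /\
     forall k, (b <= k < N)%N -> char_poly (F i) != char_poly (diag_block A k)) ->
  horner_mx A (\prod_(i <- s | P i) char_poly (F i)) *m y = 0 -> supported_before b y.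
Proof.
move=> le_bN triuA discA coprime qy.
suff /(_ (N - b)%N (leqnn _)) : forall m, (m <= N - b)%N -> supported_before (N - m) y.
  by rewrite subKn.
elim=> [|m IHm] le_m; first by move=> i; rewrite subn0 leqNgt blk_lt_nblocks.
set k := (N - m.+1)%N; have lt_kN : (k < N)%N by lia.
have le_bk : (b <= k < N)%N by rewrite lt_kN andbT; lia.
have yk : supported_before k.+1 y.
  by rewrite (_ : k.+1 = N - m)%N; [apply: IHm; lia | lia].
apply: (supported_beforeS lt_kN yk).
have := congr1 (mulmx (block_proj k)) qy; rewrite mulmx0 block_proj_horner //.
apply: horner_mx_prod_char_poly2_eq0 (discA _ le_bk) _ => i si Pi.
by have [discF neF] := coprime i si Pi; split=> //; apply: neF.
Qed.

End BlockTriangular.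

Definition ordered_blocks (R : rcfType) n' l (A : 'M[R]_n'.+1) :=
  [/\ (l.*2 <= n'.+1)%N, block_triu l A,
      forall k, disc_mx2 (diag_block l A k) <= 0 &
      forall k k', (k <= k' < nblocks n'.+1 l)%N ->
        (mx2_key (diag_block l A k) <= mx2_key (diag_block l A k'))%O].

Lemma ordered_blocks_key_homo (R : rcfType) n' l (A : 'M[R]_n'.+1) :
  ordered_blocks l A -> {homo (fun i : 'I_n'.+1 => mx2_key (diag_block l A (blk l i))) :
    p q / (p <= q)%N >-> (p <= q)%O}.
Proof. by case=> l_le _ _ sorted p q le_pq; apply: sorted; rewrite leq_blk ?blk_lt_nblocks. Qed.

Section OrderedSchur.
Variables (R : rcfType) (n' l : nat) (A : 'M[R]_n'.+1).
Local Notation n := n'.+1.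
Local Notation N := (nblocks n l).
Local Notation Zk k := (diag_block l A k).
Hypothesis schurA : ordered_real_schur l A.

Lemma diag_block_real k : (l <= k)%N -> Zk k = (mxe A (k + l) (k + l))%:M.
Proof. by rewrite /diag_block ltnNge => ->. Qed.

Lemma disc_diag_block_complex k : (k < l)%N -> disc_mx2 (Zk k) < 0.
Proof.
move=> lt_kl; rewrite /diag_block lt_kl; apply: disc_mx2_lt0 => lam.
case: schurA => -[_ _ nonreal] _ root_lam.
by apply: (nonreal k lt_kl); rewrite /block_eig lt_kl.
Qed.

Lemma disc_diag_block_eq0 k : (disc_mx2 (Zk k) == 0) = (l <= k)%N.
Proof.
case: ltnP => [lt_kl|le_lk]; first by rewrite lt_eqF ?disc_diag_block_complex.
by rewrite diag_block_real // disc_scalar_mx2 eqxx.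
Qed.

Lemma disc_diag_block_le0 k : disc_mx2 (Zk k) <= 0.
Proof.
case: (ltnP k l) => [/disc_diag_block_complex/ltW //|le_lk].
by rewrite diag_block_real // disc_scalar_mx2.
Qed.

Lemma block_eig_witness k : exists lam, [/\ block_eig l A k lam,
  Normc.normc lam = Num.sqrt (\det (Zk k)) & complex.Re lam = \tr (Zk k) / 2].
Proof.
case: (ltnP k l) => [lt_kl|le_lk].
  have := char_poly2_root (disc_diag_block_le0 k).
  by rewrite /block_eig /diag_block lt_kl.
exists (mxe A (k + l) (k + l))%:C%C.
rewrite /block_eig ltnNge le_lk diag_block_real // det_scalar mxtrace_scalar.
by split=> //=; rewrite ?expr0n ?addr0 // mulr2n; field.
Qed.

Lemma ordered_real_schur_blocks : ordered_blocks l A.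
Proof.
have [[l_le triuA _] sorted] := schurA.
split=> // [|k k' /andP[le_kk' lt_k'N]]; first exact: disc_diag_block_le0.
case: (ltngtP k k') le_kk' => // [lt_kk' _|-> _]; last exact: lexx.
case: (boolP ((k' < l) || (l <= k))%N) => [same_type|]; last first.
  rewrite negb_or -leqNgt -ltnNge => /andP[le_lk' lt_kl].
  by apply: mx2_key_le_real; rewrite disc_diag_block_eq0 -?ltnNge.
have [lam [eig_k norm_k re_k]] := block_eig_witness k.
have [lam' [eig_k' norm_k' re_k']] := block_eig_witness k'.
have := sorted k k'; rewrite lt_kk' lt_k'N same_type.
move=> /(_ isT isT lam lam' eig_k eig_k') [].
rewrite norm_k norm_k' re_k re_k' ler_sqrt ?disc_mx2_le0_det_ge0 ?disc_diag_block_le0 //.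
move=> le_det le_tr; apply: mx2_key_le => // [|eq_det].
  by rewrite !disc_diag_block_eq0; case/orP: same_type => ?; apply/idP/idP; lia.
by have := le_tr (congr1 Num.sqrt eq_det); lra.
Qed.

Lemma same_eigs_of_key k k' : mx2_key (Zk k) = mx2_key (Zk k') -> same_eigs l A k k'.
Proof.
move=> ekey lam; case: (ekey) => edisc _ etr.
rewrite !disc_diag_block_eq0 in edisc; rewrite /block_eig !ltnNge -edisc.
case: (leqP l k) => [le_lk|lt_kl] /=.
  move: etr; rewrite !diag_block_real -?edisc // !mxtrace_scalar !mulr2n => etr.
  by have -> : mxe A (k + l) (k + l) = mxe A (k' + l) (k' + l) by lra.
move/eqP: ekey; rewrite mx2_key_eq /diag_block lt_kl ifT => [/eqP->//|].
by rewrite ltnNge -edisc -ltnNge.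
Qed.

Lemma same_group_of_key (p q : 'I_n) :
  mx2_key (Zk (blk l p)) = mx2_key (Zk (blk l q)) -> same_group l A p q.
Proof.
have [l_le _ _ sorted] := ordered_real_schur_blocks.
move=> epq t /andP[le_min_t le_t_max]; apply: same_eigs_of_key.
have lt_maxN : (maxn (blk l p) (blk l q) < N)%N by rewrite gtn_max !blk_lt_nblocks.
have key_min : mx2_key (Zk (minn (blk l p) (blk l q))) = mx2_key (Zk (blk l p)).
  by rewrite /minn; case: ifP.
have key_max : mx2_key (Zk (maxn (blk l p) (blk l q))) = mx2_key (Zk (blk l p)).
  by rewrite /maxn; case: ifP.
apply/eqP; rewrite eq_le; apply/andP; split.
  by rewrite -{1}key_min; apply: sorted; rewrite le_min_t (leq_ltn_trans le_t_max).
by rewrite -{1}key_max; apply: sorted; rewrite le_t_max.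
Qed.

End OrderedSchur.

Section Intertwiner.
Variables (R : rcfType) (n' l lh : nat) (A B U : 'M[R]_n'.+1).
Local Notation n := n'.+1.
Local Notation keyA i := (mx2_key (diag_block l A (blk l i))).
Local Notation keyB i := (mx2_key (diag_block lh B (blk lh i))).
Hypotheses (blocksA : ordered_blocks l A) (blocksB : ordered_blocks lh B).
Hypothesis BU : B *m U = U *m A.

Lemma intertwiner_eq0 c (i j : 'I_n) : (keyA j <= c)%O -> (c < keyB i)%O -> U i j = 0.
Proof.
move=> le_jc lt_ci; have [lA triuA discA sortedA] := blocksA.
have [lB triuB discB sortedB] := blocksB.
set q := \prod_(0 <= k < nblocks n l | (mx2_key (diag_block l A k) <= c)%O)
  char_poly (diag_block l A k).
have lt_jN := blk_lt_nblocks lA j.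
have qA_ej : horner_mx A q *m (delta_mx j 0 : 'cV[R]_n) = 0.
  rewrite /q (big_cat_nat (leq0n _) lt_jN) /=.
  rewrite [X in X * _](_ : _ = \prod_(0 <= k < (blk l j).+1) char_poly (diag_block l A k)).
    rewrite mulrC rmorphM -mulmxA horner_mx_prod_diag_blocks_eq0 ?mulmx0 //.
    by move=> i' lt_ji'; rewrite mxE; case: eqP lt_ji' => // ->; rewrite ltnn.
  rewrite big_mkcond; apply: eq_big_nat => k /andP[_ le_kj].
  by rewrite (le_trans _ le_jc) // sortedA // -ltnS le_kj.
have qB_Uj : horner_mx B q *m col j U = 0.
  by rewrite colE mulmxA (horner_mx_intertwine _ BU) -mulmxA qA_ej mulmx0.
have lt_iN := blk_lt_nblocks lB i.
suff /(_ i (leqnn _)) : supported_before lh (blk lh i) (col j U) by rewrite mxE.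
apply: (supported_before_horner_eq0 lB (ltnW lt_iN) triuB _ _ qB_Uj) => // k _ le_kc.
split=> // k' le_ik'; rewrite -mx2_key_eq lt_eqF //.
by rewrite (le_lt_trans le_kc) // (lt_le_trans lt_ci) // sortedB.
Qed.

End Intertwiner.

Lemma initial_segment_subset n (X Y : {set 'I_n}) :
  (forall p q : 'I_n, p \in X -> (q <= p)%N -> q \in X) ->
  (forall p q : 'I_n, p \in Y -> (q <= p)%N -> q \in Y) ->
  #|X| = #|Y| -> X \subset Y.
Proof.
move=> downX downY cardXY; apply/subsetP => i Xi; apply/negPn/negP => Yi.
suff /proper_card : Y \proper X by rewrite cardXY ltnn.
apply/properP; split; last by exists i.
apply/subsetP => q Yq; apply: (downX i) => //.
by case: leqP => // /ltnW le_iq; case/negP: Yi; apply: downY le_iq.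
Qed.

Lemma orthogonal_col_sum (R : numDomainType) n (U : 'M[R]_n) (P : {pred 'I_n}) j :
  U^T *m U = 1%:M -> (forall i, i \notin P -> U i j = 0) -> \sum_(i in P) U i j ^+ 2 = 1.
Proof.
move=> orthoU outP; have := congr1 (fun M : 'M[R]_n => M j j) orthoU; rewrite !mxE eqxx mulr1n => <-.
rewrite [RHS](bigID (mem P)) /= [X in _ = _ + X]big1 ?addr0 => [|i /outP->]; last by rewrite mulr0.
by apply: eq_bigr => i _; rewrite mxE expr2.
Qed.

Section Orthogonal.
Variables (R : rcfType) (n' l lh : nat) (A B U : 'M[R]_n'.+1).
Local Notation n := n'.+1.
Local Notation keyA i := (mx2_key (diag_block l A (blk l i))).
Local Notation keyB i := (mx2_key (diag_block lh B (blk lh i))).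
Hypotheses (blocksA : ordered_blocks l A) (blocksB : ordered_blocks lh B).
Hypotheses (orthoU : U^T *m U = 1%:M) (BU : B *m U = U *m A).

Let orthoUt : U^T^T *m U^T = 1%:M.
Proof. by rewrite trmxK; apply: mulmx1C. Qed.

Let AUt : A *m U^T = U^T *m B.
Proof.
rewrite -[LHS]mul1mx -orthoU -mulmxA [U *m (A *m U^T)]mulmxA -BU.
by rewrite -!mulmxA (mulmx1C orthoU) mulmx1.
Qed.

(* Count the squared entries of U on Q x P by rows and by columns. *)
Lemma card_key_le c :
  #|[set i : 'I_n | (keyA i <= c)%O]| = #|[set i : 'I_n | (keyB i <= c)%O]|.
Proof.
set P := [set i | _]; set Q := [set i | _]; apply/eqP; rewrite -(eqr_nat R).
have UPQ i j : j \in P -> i \notin Q -> U i j = 0.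
  by rewrite !inE -ltNge; apply: intertwiner_eq0.
have UQP i j : i \in Q -> j \notin P -> U i j = 0.
  rewrite !inE -ltNge => le_ic lt_cj.
  by have := intertwiner_eq0 blocksB blocksA AUt le_ic lt_cj; rewrite mxE.
rewrite -!sum1_card !natr_sum; apply/eqP.
transitivity (\sum_(j in P) \sum_(i in Q) U i j ^+ 2).
  by apply: eq_bigr => j Pj; rewrite orthogonal_col_sum // => i /UPQ->.
rewrite exchange_big /=; apply: eq_bigr => i Qi.
rewrite -(orthogonal_col_sum (P := P) (j := i) orthoUt) => [|j /(UQP _ _ Qi)]; last by rewrite mxE.
by apply: eq_bigr => j _; rewrite mxE.
Qed.

Lemma key_le_sets_eq c :
  [set i : 'I_n | (keyA i <= c)%O] = [set i : 'I_n | (keyB i <= c)%O].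
Proof.
have down (key : 'I_n -> _) : {homo key : p q / (p <= q)%N >-> (p <= q)%O} ->
    forall p q : 'I_n, p \in [set i | (key i <= c)%O] -> (q <= p)%N -> q \in [set i | (key i <= c)%O].
  by move=> key_mono p q; rewrite !inE => le_pc /key_mono/le_trans; apply.
have [downA downB] := (down _ (ordered_blocks_key_homo blocksA), down _ (ordered_blocks_key_homo blocksB)).
by apply/eqP; rewrite eqEsubset !initial_segment_subset // card_key_le.
Qed.

Lemma intertwiner_keys_agree (i : 'I_n) : keyA i = keyB i.
Proof.
apply/eqP; rewrite eq_le.
have /setP/(_ i) := key_le_sets_eq (keyB i); rewrite !inE lexx => ->.
by have /setP/(_ i) := key_le_sets_eq (keyA i); rewrite !inE lexx => <-.
Qed.

Lemma intertwiner_key_eq (i j : 'I_n) : U i j != 0 -> keyA i = keyA j.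
Proof.
move=> nz; apply/eqP; rewrite eq_le !leNgt; apply/andP; split; apply: contra nz => lt_key.
  by apply/eqP; apply: (intertwiner_eq0 blocksA blocksB BU (lexx _)); rewrite -intertwiner_keys_agree.
apply/eqP; have := intertwiner_eq0 blocksB blocksA AUt (lexx (keyB i)).
by rewrite -intertwiner_keys_agree => /(_ j lt_key); rewrite mxE.
Qed.

End Orthogonal.

Theorem theorem9p2 (R : rcfType) (n l lh : nat) (A Ah U : 'M[R]_n) :
  ordered_real_schur l A -> ordered_real_schur lh Ah ->
  orthogonal_mx U -> Ah *m U = U *m A ->
  (forall i j : 'I_n, ~ same_group l A i j -> U i j = 0) /\
  (forall i j : 'I_n, same_group l A i j ->
     \sum_(k : 'I_n | same_group_b l A i k) U k i * U k j = (i == j)%:R).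
Proof.
case: n A Ah U => [|n'] A Ah U schurA schurAh orthoU AhU; first by split=> -[].
have key_eq := intertwiner_key_eq (ordered_real_schur_blocks schurA)
  (ordered_real_schur_blocks schurAh) orthoU AhU.
have U_eq0 (i j : 'I_n'.+1) : ~ same_group l A i j -> U i j = 0.
  by move=> not_ij; apply/eqP; apply: contra_notT not_ij => /key_eq/same_group_of_key; apply.
split=> // i j _; have := congr1 (fun M : 'M[R]_n'.+1 => M i j) orthoU.
rewrite !mxE => <-; rewrite [RHS](bigID (fun k : 'I_n'.+1 => same_group_b l A i k)) /=.
rewrite [X in _ = _ + X]big1 ?addr0 => [|k /boolp.asboolPn not_ik]; last first.
  rewrite mxE; suff -> : U k i = 0 by rewrite mul0r.
  by apply/eqP; apply: contra_notT not_ik => /key_eq/esym/same_group_of_key; apply.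
by apply: eq_bigr => k _; rewrite mxE.
Qed.
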